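(* For the binary tree-shifts $X_4=(A,D)$ and $X_6=(A,F)$, the limit $h_{PS}$ exists and $$h_{PS}(X_4)=h_{PS}(X_6)=\sum_{n=2}^\infty\frac{1}{2^n}\log\operatorname{Fib}(n+1),$$ where $(\operatorname{Fib}(m))_{m\ge1}=(1,1,2,3,5,8,\dots)$ is the Fibonacci sequence. Moreover, for $X_4$ one has for all $n\ge3$: $p(n)=\operatorname{Fib}(n+3)\operatorname{Fib}(n+2)\prod_{\ell=3}^{n+1}\operatorname{Fib}(\ell)^{2^{n+2-\ell}}$.
   Context: Binary tree-shifts: $k=2$, directions $a_1,a_2$, alphabet $\{0,1\}$; $(P,Q)$ is the set of trees $t:\{a_1,a_2\}^*\to\{0,1\}$ with $P_{t_x,t_{xa_1}}=1$, $Q_{t_x,t_{xa_2}}=1$ for all nodes $x$. Matrices: $A=\begin{pmatrix}1&1\\1&1\end{pmatrix}$, $D=\begin{pmatrix}1&1\\1&0\end{pmatrix}$, $F=\begin{pmatrix}0&1\\1&1\end{pmatrix}$. $p(n)$ is the number of allowed blocks of length $n$ (labellings $t|_{\Delta_n}$, $\Delta_n$ the words of length $\le n$), and $h_{PS}=\lim_{n\to\infty}\frac{\log p(n)}{1+2+\cdots+2^n}$. *)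

From HB Require Import structures.
From mathcomp Require Import all_boot all_order all_algebra.
From mathcomp Require Import all_classical all_reals all_analysis.
Set Implicit Arguments. Unset Strict Implicit. Unset Printing Implicit Defensive.
Import Order.TTheory GRing.Theory Num.Theory.

(* Alphabet {0,1} is 'I_2. Directions a1, a2 are encoded as false, true.
   A node x in {a1,a2}^* is a seq bool; x a_i is rcons x (dir). *)
Definition tree := seq bool -> 'I_2.

Definition in_shift (P Q : 'M[nat]_2) (t : tree) : Prop :=
  forall x : seq bool,
    P (t x) (t (rcons x false)) = 1%N /\ Q (t x) (t (rcons x true)) = 1%N.

Definition Delta (n : nat) : finType := {k : 'I_n.+1 & k.-tuple bool}.

Definition block (n : nat) : finType := {ffun Delta n -> 'I_2}.

Definition allowed (P Q : 'M[nat]_2) (n : nat) (b : block n) : Prop :=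
  exists t : tree, in_shift P Q t /\ forall x : Delta n, b x = t (tval (tagged x)).

Definition pcount (P Q : 'M[nat]_2) (n : nat) : nat :=
  #|[set b : block n | `[< allowed P Q b >]]|.

Definition matA : 'M[nat]_2 := \matrix_(i < 2, j < 2) 1%N.
Definition matD : 'M[nat]_2 :=
  \matrix_(i < 2, j < 2) (if (i == 1 :> nat) && (j == 1 :> nat) then 0 else 1)%N.
Definition matF : 'M[nat]_2 :=
  \matrix_(i < 2, j < 2) (if (i == 0 :> nat) && (j == 0 :> nat) then 0 else 1)%N.

Fixpoint Fib (n : nat) : nat :=
  match n with
  | 0 => 0
  | 1 => 1
  | (m.+1 as k).+1 => Fib k + Fib m
  end.

Local Open Scope ring_scope.

Definition hPS_seq (R : realType) (P Q : 'M[nat]_2) (n : nat) : R :=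
  ln ((pcount P Q n)%:R) / ((\sum_(0 <= i < n.+1) 2 ^ i)%N)%:R.

Definition fib_partial (R : realType) (N : nat) : R :=
  \sum_(2 <= k < N) ln ((Fib k.+1)%:R : R) / (2 ^ k)%:R.

From HB Require Import structures.
From mathcomp Require Import all_boot all_order all_algebra.
From mathcomp Require Import all_classical all_reals all_analysis.
From mathcomp Require Import ring lra zify.
Set Implicit Arguments. Unset Strict Implicit. Unset Printing Implicit Defensive.
Import Order.TTheory GRing.Theory Num.Theory.
Import numFieldNormedType.Exports.

(* Only right children are constrained, so an allowed block of depth n+1 with
   root s is a pair of allowed blocks of depth n, the right one having a root
   that may follow s.  For (A,D), writing a_n for the blocks with root 0 and
   T_n for all blocks, this gives a_{n+1} = T_n^2 and T_{n+1} = T_n^2 + T_n a_n,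
   hence a_n = Fib(n+2)^2 G_n and T_n = Fib(n+3) Fib(n+2) G_n where
   G_{n+1} = G_n^2 Fib(n+2)^2.  Unfolding G_n gives the product formula and
   ln G_n = 2^(n+1) \sum_(2 <= k <= n) 2^-k ln Fib(k+1); the two remaining
   Fibonacci factors are O((7/4)^n), negligible against 1 + ... + 2^n.
   Exchanging the symbols 0 and 1 turns (A,F) into (A,D). *)

Section Words.
Variable n : nat.

Definition delta_word (x : Delta n) : seq bool := tval (tagged x).

Definition delta_root : Delta n :=
  existT (fun k : 'I_n.+1 => k.-tuple bool) ord0 [tuple].

(* Words longer than [n] are sent to the root, a junk value never used. *)
Definition delta_of_word (w : seq bool) : Delta n :=
  odflt delta_root [pick x : Delta n | delta_word x == w].

Lemma size_delta_word (x : Delta n) : size (delta_word x) <= n.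
Proof. by case: x => k t; rewrite /delta_word /= size_tuple -ltnS ltn_ord. Qed.

Lemma delta_word_inj : injective delta_word.
Proof.
case=> k1 t1 [k2 t2]; rewrite /delta_word /= => e.
have ek : k1 = k2 by apply: val_inj; rewrite /= -(size_tuple t1) -(size_tuple t2) e.
by subst k2; congr existT; apply: val_inj.
Qed.

Lemma delta_of_wordK w : size w <= n -> delta_word (delta_of_word w) = w.
Proof.
move=> hw; rewrite /delta_of_word; case: pickP => [x /eqP //| none].
have hw' : size w < n.+1 by [].
have := none (existT (fun k : 'I_n.+1 => k.-tuple bool) (Ordinal hw') (in_tuple w)).
by rewrite /delta_word /= eqxx.
Qed.

Lemma delta_wordK : cancel delta_word delta_of_word.
Proof. by move=> x; apply: delta_word_inj; rewrite delta_of_wordK ?size_delta_word. Qed.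

Definition label (b : block n) (w : seq bool) : 'I_2 := b (delta_of_word w).

Lemma block_label (b : block n) (x : Delta n) : b x = label b (delta_word x).
Proof. by rewrite /label delta_wordK. Qed.

End Words.

Arguments delta_of_word : clear implicits.

Section LeftFree.
Variable Q : 'M[nat]_2.

(* With P = A only the constraint Q along right children remains. *)
Definition admissible n (b : block n) : Prop :=
  forall w, size w < n -> Q (label b w) (label b (rcons w true)) = 1.

Definition admissible_set n := [set b : block n | `[< admissible b >]].

Definition rooted_set n (s : 'I_2) :=
  [set b in admissible_set n | label b [::] == s].

Definition successor_set n (s : 'I_2) :=
  [set b in admissible_set n | Q s (label b [::]) == 1].

Lemma matA1 i j : matA i j = 1. Proof. by rewrite mxE. Qed.

(* An admissible block extends to a tree labelled [0] below level [n], which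
   column [0] of [Q] always allows. *)
Lemma allowed_admissible n (b : block n) :
  (forall i, Q i ord0 = 1) -> allowed matA Q b <-> admissible b.
Proof.
move=> Q_col0; split.
  case=> t [ht hb] w hw.
  have tE w' : size w' <= n -> label b w' = t w'.
    by move=> h; rewrite /label hb -[tval _]/(delta_word _) delta_of_wordK.
  by rewrite !tE ?size_rcons ?(ltnW hw) //; case: (ht w).
move=> hb; exists (fun w => if size w <= n then label b w else ord0); split.
  move=> x; rewrite matA1 size_rcons; split=> //.
  case: (ltnP (size x) n) => h; first by rewrite (ltnW h) hb.
  by case: ifP.
by move=> x; rewrite size_delta_word block_label.
Qed.

Definition subblock n (d : bool) (b : block n.+1) : block n :=
  [ffun x => label b (d :: delta_word x)].

Definition graft n (s : 'I_2) (b0 b1 : block n) : block n.+1 :=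
  [ffun x => if delta_word x is d :: w then label (if d then b1 else b0) w else s].

Lemma label_subblock n d (b : block n.+1) w :
  size w <= n -> label (subblock d b) w = label b (d :: w).
Proof. by move=> hw; rewrite /label ffunE delta_of_wordK. Qed.

Lemma label_graft n s (b0 b1 : block n) w : size w <= n.+1 ->
  label (graft s b0 b1) w = if w is d :: w' then label (if d then b1 else b0) w' else s.
Proof. by move=> hw; rewrite /label ffunE delta_of_wordK. Qed.

Lemma subblock_graft n s (b0 b1 : block n) d :
  subblock d (graft s b0 b1) = if d then b1 else b0.
Proof.
apply/ffunP => x; rewrite ffunE label_graft ?ltnS ?size_delta_word //=.
by rewrite -block_label.
Qed.

Lemma block_eq_subblock n (b b' : block n.+1) :
  label b [::] = label b' [::] -> subblock false b = subblock false b' ->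
  subblock true b = subblock true b' -> b = b'.
Proof.
move=> e e0 e1; apply/ffunP => x; rewrite !block_label.
case: (delta_word x) (size_delta_word x) => [|d w] // hw.
by rewrite -!label_subblock //; case: d hw; rewrite ?e0 ?e1.
Qed.

Lemma card_rooted_setS n s :
  #|rooted_set n.+1 s| = #|admissible_set n| * #|successor_set n s|.
Proof.
rewrite -cardsX -(card_in_imset (f := fun b => (subblock false b, subblock true b))).
  apply: eq_card => -[c0 c1]; rewrite [in RHS]inE !inE /=.
  apply/imsetP/andP.
    case=> b; rewrite !inE => /andP [/asboolP hb /eqP <-] [-> ->].
    have adm_sub d : `[< admissible (subblock d b) >].
      apply/asboolP => w hw.
      by rewrite !label_subblock ?size_rcons ?(ltnW hw) //; apply: (hb (d :: w)).
    split; first exact/asboolP/(adm_sub false).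
    by rewrite adm_sub label_subblock //; apply/eqP/(hb [::]).
  case=> /asboolP h0 /andP [/asboolP h1 /eqP hs].
  exists (graft s c0 c1); last by rewrite !subblock_graft.
  rewrite !inE label_graft // eqxx andbT; apply/asboolP => -[|d w] hw.
    by rewrite /= !label_graft.
  rewrite label_graft 1?ltnW // [rcons _ _]/= label_graft; last by rewrite /= size_rcons.
  by case: d hw => hw; [apply: h1 | apply: h0].
move=> b b'; rewrite !inE => /andP [_ /eqP r] /andP [_ /eqP r'] [e0 e1].
by apply: block_eq_subblock; rewrite ?r ?r'.
Qed.

Lemma card_rooted_set0 s : #|rooted_set 0 s| = 1.
Proof.
rewrite -(cards1 ([ffun => s] : block 0)); apply: eq_card => b; rewrite !inE.
apply/andP/eqP => [[_ /eqP hs]|->].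
  apply/ffunP => x; rewrite ffunE block_label.
  by move: (size_delta_word x); rewrite leqn0 size_eq0 => /eqP ->.
by split; [apply/asboolP | rewrite /label ffunE].
Qed.

Lemma card_admissible_set n :
  #|admissible_set n| = #|rooted_set n ord0| + #|rooted_set n ord_max|.
Proof.
rewrite -(cardsID [set b : block n | label b [::] == ord0]); congr (_ + _).
  by apply: eq_card => b; rewrite !inE andbC.
apply: eq_card => b; rewrite !inE andbC; congr (_ && _).
by case: (label b [::]) => -[|[|]].
Qed.

End LeftFree.

Lemma matD_col0 i : matD i ord0 = 1. Proof. by rewrite mxE andbF. Qed.

Lemma successor_setD0 n : successor_set matD n ord0 = admissible_set matD n.
Proof. by apply/setP => b; rewrite !inE mxE andbT. Qed.

Lemma card_successor_setD1 n :
  #|successor_set matD n ord_max| = #|rooted_set matD n ord0|.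
Proof.
apply: eq_card => b; rewrite !inE mxE /=; congr (_ && _).
by case: (label b [::]) => -[|[|]].
Qed.

Fixpoint fib_tower n := if n is m.+1 then fib_tower m ^ 2 * Fib m.+2 ^ 2 else 1.

Lemma fib_towerS n : fib_tower n.+1 = fib_tower n ^ 2 * Fib n.+2 ^ 2.
Proof. by []. Qed.

Lemma FibS n : Fib n.+2 = Fib n.+1 + Fib n. Proof. by []. Qed.

Lemma card_admissible_setD n :
  #|rooted_set matD n ord0| = Fib n.+2 ^ 2 * fib_tower n /\
  #|admissible_set matD n| = Fib n.+3 * Fib n.+2 * fib_tower n.
Proof.
elim: n => [|n [IH0 IH]]; first by rewrite card_admissible_set !card_rooted_set0.
have IH0' : #|rooted_set matD n.+1 ord0| = Fib n.+3 ^ 2 * fib_tower n.+1.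
  by rewrite card_rooted_setS successor_setD0 IH fib_towerS; ring.
split => //.
rewrite card_admissible_set IH0' card_rooted_setS card_successor_setD1 IH IH0.
by rewrite fib_towerS (FibS n.+2); ring.
Qed.

Lemma pcountD n : pcount matA matD n = Fib n.+3 * Fib n.+2 * fib_tower n.
Proof.
rewrite -(card_admissible_setD n).2; apply: eq_card => b; rewrite !inE.
by apply/asboolP/asboolP => /allowed_admissible-/(_ matD_col0).
Qed.

Lemma fib_towerE n : \prod_(3 <= l < n + 2) Fib l ^ (2 ^ (n + 2 - l)) = fib_tower n.
Proof.
elim: n => [|[|n] IH]; [by rewrite big_geq | by rewrite big_geq |].
rewrite fib_towerS -IH addSn big_nat_recr /=; last by rewrite addn2.
rewrite subSn // subnn expn1; congr (_ * _); last by rewrite addn2.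
rewrite (expnS _ 1) expn1 -big_split /=; apply: eq_big_nat => l /andP [_ hl].
by rewrite subSn 1?ltnW // expnS mul2n -addnn expnD.
Qed.

Lemma matF_rev i j : matF (rev_ord i) (rev_ord j) = matD i j.
Proof. by rewrite !mxE; case: i => -[|[|]] ?; case: j => -[|[|]] ?. Qed.

Definition complement_block n (b : block n) : block n := [ffun x => rev_ord (b x)].

Lemma complement_blockK n : involutive (@complement_block n).
Proof. by move=> b; apply/ffunP => x; rewrite !ffunE rev_ordK. Qed.

Lemma allowedF_complement n (b : block n) :
  allowed matA matD b -> allowed matA matF (complement_block b).
Proof.
case=> t [ht hb]; exists (fun w => rev_ord (t w)); split.
  by move=> x; rewrite !matA1 matF_rev; case: (ht x).
by move=> x; rewrite ffunE hb.
Qed.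

Lemma allowedD_complement n (b : block n) :
  allowed matA matF b -> allowed matA matD (complement_block b).
Proof.
case=> t [ht hb]; exists (fun w => rev_ord (t w)); split.
  by move=> x; rewrite !matA1 -matF_rev !rev_ordK; case: (ht x).
by move=> x; rewrite ffunE hb.
Qed.

Lemma pcountF n : pcount matA matF n = pcount matA matD n.
Proof.
rewrite /pcount -(card_imset _ (can_inj (@complement_blockK n))).
apply: eq_card => b; rewrite [in RHS]inE; apply/imsetP/asboolP.
  by case=> c; rewrite inE => /asboolP/allowedD_complement hc ->.
move=> /allowedF_complement hb; exists (complement_block b).
  by rewrite inE; apply/asboolP.
by rewrite complement_blockK.
Qed.

Lemma Fib_gt0 n : 0 < Fib n.+1.
Proof. by elim: n => // n IH; rewrite FibS ltn_addr. Qed.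

Lemma fib_tower_gt0 n : 0 < fib_tower n.
Proof. by elim: n => // n IH; rewrite fib_towerS muln_gt0 !expn_gt0 IH Fib_gt0. Qed.

(* [7/4] lies between the golden ratio and [2], which makes the series
   [\sum_k ln Fib(k+1) / 2^k] dominated by a geometric series of ratio [7/8]. *)
Lemma Fib_le_pow m : 4 ^ m * Fib m <= 7 ^ m.
Proof.
suff : 4 ^ m * Fib m <= 7 ^ m /\ 4 ^ m.+1 * Fib m.+1 <= 7 ^ m.+1 by case.
elim: m => [|m [h0 h1]] //; split => //.
rewrite FibS mulnDr; move: h0 h1; rewrite !expnS; nia.
Qed.

Lemma sum_pow2 n : \sum_(0 <= i < n) 2 ^ i = (2 ^ n).-1.
Proof. by rewrite big_mkord predn_exp mul1n. Qed.

Section Entropy.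
Variable R : realType.
Local Open Scope ring_scope.
Local Open Scope classical_set_scope.

Definition lnFib k : R := ln (Fib k)%:R.

Lemma ln_nat_ge0 k : 0 <= ln (k%:R : R).
Proof. by case: k => [|k]; [rewrite ln0 | apply: ln_ge0; rewrite ler1n]. Qed.

Lemma ln_nat_le k : ln (k%:R : R) <= k%:R.
Proof.
case: k => [|k]; first by rewrite ln0.
rewrite -addn1 natrD addrC; apply: le_trans (le_ln1Dx _) _; last by rewrite lerDr.
by apply: (@lt_le_trans _ _ 0); rewrite ?ltrN10 ?ler0n.
Qed.

Lemma lnFib_ge0 k : 0 <= lnFib k. Proof. exact: ln_nat_ge0. Qed.

Lemma lnFib_le k : lnFib k <= (7/4) ^+ k.
Proof.
apply: le_trans (ln_nat_le _) _.
have : ((4 ^ k * Fib k)%:R <= (7 ^ k)%:R :> R) by rewrite ler_nat Fib_le_pow.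
by rewrite natrM !natrX exprMn exprVn ler_pdivlMr ?exprn_gt0 // mulrC.
Qed.

Lemma fib_partial_recr N :
  fib_partial R N.+2 = fib_partial R N.+1 + lnFib N.+2 / (2 ^ N.+1)%:R.
Proof.
case: N => [|N]; last by rewrite /fib_partial big_nat_recr.
by rewrite /fib_partial !big_geq // /lnFib ln1 mul0r addr0.
Qed.

Lemma fib_partial_ge0 N : 0 <= fib_partial R N.
Proof. by apply: sumr_ge0 => k _; rewrite divr_ge0 ?ln_nat_ge0. Qed.

Lemma fib_partial_nondecreasing : nondecreasing_seq (fib_partial R).
Proof.
apply/nondecreasing_seqP => -[|N]; first by rewrite /fib_partial !big_geq.
by rewrite fib_partial_recr lerDl divr_ge0 ?lnFib_ge0.
Qed.

Lemma fib_partial_le N : fib_partial R N <= 14 - 14 * (7/8) ^+ N.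
Proof.
elim: N => [|[|N] IH]; first by rewrite /fib_partial big_geq // mulr1 subrr.
  by rewrite /fib_partial big_geq //; lra.
have term : lnFib N.+2 / (2 ^ N.+1)%:R <= 7/4 * (7/8) ^+ N.+1.
  rewrite natrX ler_pdivrMr ?exprn_gt0 // -[7/4 * _ * _]mulrA -exprMn.
  by rewrite (_ : 7/8 * 2 = 7/4 :> R) -?exprS ?lnFib_le //; lra.
rewrite fib_partial_recr [(7/8) ^+ N.+2]exprS; lra.
Qed.

Lemma fib_partial_cvg : cvgn (fib_partial R).
Proof.
apply: nondecreasing_is_cvgn; first exact: fib_partial_nondecreasing.
exists 14 => _ [N _ <-]; apply: le_trans (fib_partial_le N) _.
by rewrite lerBlDr lerDl mulr_ge0 // exprn_ge0.
Qed.

Lemma ln_fib_tower n : ln (fib_tower n)%:R = 2 ^+ n.+1 * fib_partial R n.+1.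
Proof.
elim: n => [|n IH]; first by rewrite /fib_partial big_geq // mulr0 ln1.
have tower_gt0 : (0 : R) < (fib_tower n)%:R by rewrite ltr0n fib_tower_gt0.
have Fib_gt0' : (0 : R) < (Fib n.+2)%:R by rewrite ltr0n Fib_gt0.
rewrite fib_towerS natrM !natrX lnM ?posrE ?exprn_gt0 // !lnXn // IH.
rewrite fib_partial_recr natrX -/(lnFib _) [2 ^+ n.+2]exprS.
have two_pow_neq0 : (2 : R) ^+ n.+1 != 0 by rewrite expf_neq0 // pnatr_eq0.
by rewrite !mulr2n; field.
Qed.

Definition hPS_error n : R :=
  (lnFib n.+3 + lnFib n.+2 + fib_partial R n.+1) / (2 ^+ n.+1 - 1).

Lemma hPS_seqD n : hPS_seq R matA matD n = hPS_error n + fib_partial R n.+1.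
Proof.
have two_pow_gt1 : (1 : R) < 2 ^+ n.+1 by rewrite exprn_egt1 // ltr1n.
rewrite /hPS_seq /hPS_error pcountD sum_pow2 -subn1 natrB ?expn_gt0 // natrX.
rewrite !natrM lnM ?posrE ?mulr_gt0 ?ltr0n ?fib_tower_gt0 ?Fib_gt0 //.
rewrite lnM ?posrE ?ltr0n ?Fib_gt0 // ln_fib_tower -!/(lnFib _).
by field; rewrite subr_eq0 gt_eqF.
Qed.

Lemma hPS_error_ge0 n : 0 <= hPS_error n.
Proof.
apply: divr_ge0; first by rewrite !addr_ge0 ?lnFib_ge0 ?fib_partial_ge0.
by rewrite subr_ge0 exprn_ege1 // ler1n.
Qed.

Lemma hPS_error_le n : hPS_error n <= 23 * (7/8) ^+ n.
Proof.
set q := (7/8 : R) ^+ n; set x := q * 2 ^+ n.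
have two_pow_ge1 : (1 : R) <= 2 ^+ n by rewrite exprn_ege1 // ler1n.
have lnFib_le' k : lnFib (n + k) <= (7/4) ^+ k * x.
  rewrite mulrC /x -exprMn (_ : 7/8 * 2 = 7/4 :> R) -?exprD ?lnFib_le //; lra.
have l3 : lnFib n.+3 <= 343/64 * x.
  by move: (lnFib_le' 3); rewrite addn3 !exprS expr0 => h; lra.
have l2 : lnFib n.+2 <= 49/16 * x.
  by move: (lnFib_le' 2); rewrite addn2 !exprS expr0 => h; lra.
have fp := fib_partial_le n.+1.
have q0 : 0 <= (7/8 : R) ^+ n.+1 by rewrite exprn_ge0.
have qx : q <= x by rewrite ler_peMr ?exprn_ge0.
have x1 : 1 <= x by rewrite /x -exprMn exprn_ege1 //; lra.
rewrite /hPS_error ler_pdivrMr exprS; last lra.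
rewrite (_ : 23 * q * _ = 46 * x - 23 * q); last by rewrite /x; ring.
lra.
Qed.

Lemma hPS_error_cvg0 : hPS_error @ \oo --> 0.
Proof.
apply: (@squeeze_cvgr _ _ _ _ (fun=> 0) (geometric 23 (7/8))).
- by apply: nearW => n; rewrite hPS_error_ge0 hPS_error_le.
- exact: cvg_cst.
- by apply: cvg_geometric; rewrite ger0_norm; lra.
Qed.

End Entropy.

Local Open Scope ring_scope.
Local Open Scope classical_set_scope.

Theorem mainTheorem13 (R : realType) :
  (exists l : R,
      fib_partial R @ \oo --> l /\
      hPS_seq R matA matD @ \oo --> l /\
      hPS_seq R matA matF @ \oo --> l) /\
  (forall n : nat, (3 <= n)%N ->
      pcount matA matD n =
        (Fib (n + 3) * Fib (n + 2) *
         \prod_(3 <= l < n + 2) Fib l ^ (2 ^ (n + 2 - l)))%N).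
Proof.
split; last by move=> n _; rewrite fib_towerE pcountD !addnS addn0.
have hPS_D : hPS_seq R matA matD @ \oo --> limn (fib_partial R).
  rewrite (funext (@hPS_seqD R)) -[limn _]add0r.
  apply: cvgD; first exact: hPS_error_cvg0.
  by rewrite (cvg_shiftS (fib_partial R)); apply: fib_partial_cvg.
exists (limn (fib_partial R)); split; first exact: fib_partial_cvg.
split => //; suff -> : hPS_seq R matA matF = hPS_seq R matA matD by [].
by apply/funext => n; rewrite /hPS_seq pcountF.
Qed.
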